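(* Let $\theta>0$, $\beta>1$, $g,h,m\ge0$, let $T$ be a positive integer, and let $c$ be the constant defined in the context. For integers $s<T$ and $a\ge0$, let $t_{(s,a)}\in\{s+1,\ldots,T+1\}$ be a minimizer of $t\mapsto f_{(s,a)}(t)$ over $\{s+1,\ldots,T+1\}$. Let $\delta\ge1$ be an integer such that $s+\delta<t_{(s,a)}\le T$. Then $t_{(s,a)}$ is also a minimizer of $t\mapsto f_{(s+\delta,a+\delta)}(t)$ over $\{s+\delta+1,\ldots,T+1\}$; that is, $t_{(s+\delta,a+\delta)}=t_{(s,a)}$.
   Context: $L$ has the discrete Weibull distribution: $\mathrm{P}(L>k)=e^{-\theta k^\beta}$ for $k=0,1,2,\ldots$. For integer $t\ge1$, $$q_t=\frac{(1-e^{-\theta t^\beta})g+e^{-\theta t^\beta}(h+mt)}{\sum_{k=1}^t (e^{-\theta (k-1)^\beta}-e^{-\theta k^\beta})k+e^{-\theta t^\beta}t},\qquad c=\min_{t\ge1}q_t$$ (assumed attained). For an integer age $a\ge0$, $L_a$ denotes a random variable distributed as $L-a$ conditionally on $L>a$, so $\mathrm{P}(L_a>k)=\exp\{\theta(a^\beta-(a+k)^\beta)\}$ for $k\ge0$. For integers $s<T$, $a\ge0$, the total maintenance cost over the planning period $\{s,\ldots,T\}$ when the next preventive maintenance is planned at time $t$ and the failure occurs at time $u$ is $$Q_{(s,a)}(t,u)=[g+(T-u)c]\,1_{\{u\le t\}}+[h+(t-s+a)m+(T-t)c]\,1_{\{u>t\}}\quad (t\in\{s+1,\ldots,T\}),$$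 $$Q_{(s,a)}(T+1,u)=[g+(T-u)c]\,1_{\{u\le T\}}$$ ($t=T+1$ means no preventive maintenance is planned). The objective is $f_{(s,a)}(t)=\mathrm{E}\big[Q_{(s,a)}(t,s+L_a)\big]$ for $t\in\{s+1,\ldots,T+1\}$ (equivalently, a PM plan is a binary vector $(x_{s+1},\ldots,x_{T+1})$ with exactly one entry equal to $1$, at position $t$), and $f^*_{(s,a)}=\min_{t\in\{s+1,\ldots,T+1\}}f_{(s,a)}(t)$, with $t_{(s,a)}$ denoting a minimizer. *)

From Stdlib Require Import Reals ZArith Lia Lra.
From Coquelicot Require Import Coquelicot.
Open Scope R_scope.

Definition pw (beta : R) (k : nat) : R :=
  match k with O => 0 | S _ => Rpower (INR k) beta end.

(* P(L > k) = exp(-theta k^beta) *)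
Definition survL (theta beta : R) (k : nat) : R := exp (- theta * pw beta k).

Fixpoint sumk (f : nat -> R) (n : nat) : R :=
  match n with O => 0 | S n' => sumk f n' + f n end.

Definition qt (theta beta g h m : R) (t : nat) : R :=
  ((1 - survL theta beta t) * g + survL theta beta t * (h + m * INR t)) /
  (sumk (fun k => (survL theta beta (k - 1) - survL theta beta k) * INR k) t
   + survL theta beta t * INR t).

Definition is_c (theta beta g h m c : R) : Prop :=
  (exists t : nat, (1 <= t)%nat /\ qt theta beta g h m t = c) /\
  (forall t : nat, (1 <= t)%nat -> c <= qt theta beta g h m t).

(* P(L_a > k) = exp(theta (a^beta - (a+k)^beta)) *)
Definition survLa (theta beta : R) (a k : nat) : R :=
  exp (theta * (pw beta a - pw beta (a + k))).

(* P(L_a = k) for k >= 1 *)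
Definition pmfLa (theta beta : R) (a k : nat) : R :=
  survLa theta beta a (k - 1) - survLa theta beta a k.

(* Q_{(s,a)}(t,u); for t = T+1 (no PM planned) the second clause applies. *)
Definition Qcost (g h m c : R) (T s : Z) (a : nat) (t u : Z) : R :=
  if (t <=? T)%Z then
    (if (u <=? t)%Z then g + IZR (T - u) * c
     else h + IZR (t - s + Z.of_nat a) * m + IZR (T - t) * c)
  else
    (if (u <=? T)%Z then g + IZR (T - u) * c else 0).

(* f_{(s,a)}(t) = E[Q_{(s,a)}(t, s + L_a)], L_a taking values k = 1, 2, ... *)
Definition fcost (theta beta g h m c : R) (T s : Z) (a : nat) (t : Z) : R :=
  Series (fun n : nat =>
    pmfLa theta beta a (S n) * Qcost g h m c T s a t (s + Z.of_nat (S n))).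

Definition is_minimizer (theta beta g h m c : R) (T s : Z) (a : nat) (t : Z) : Prop :=
  (s + 1 <= t <= T + 1)%Z /\
  forall t' : Z, (s + 1 <= t' <= T + 1)%Z ->
    fcost theta beta g h m c T s a t <= fcost theta beta g h m c T s a t'.

From Stdlib Require Import Reals ZArith Lia Lra.
From Coquelicot Require Import Coquelicot.
Open Scope R_scope.

(* Condition the residual life L_a on surviving the first d
   periods.  The survival function of L_a is multiplicative,
   P(L_a > d + j) = P(L_a > d) P(L_(a+d) > j), so the failure law of L_a
   beyond d is P(L_a > d) times the law of d + L_(a+d).  For any plan t
   with s + d <= t <= T + 1 this gives the renewal identity
     f_(s,a)(t) = E(s,a,d) + P(L_a > d) f_(s+d,a+d)(t),
   where the "early cost" E(s,a,d) of a failure at one of the ages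
   1, ..., d does not depend on t.  Since P(L_a > d) > 0, every plan after
   s + d compares the same way under f_(s,a) and f_(s+d,a+d); hence a
   minimizer t_(s,a) > s + d of the former is a minimizer of the latter. *)

Lemma pw_succ_ge (beta : R) (k : nat) : 0 <= beta -> pw beta k <= pw beta (S k).
Proof.
  intros Hbeta. destruct k as [|k].
  - left. apply exp_pos.
  - apply Rle_Rpower_l; [exact Hbeta|]. split.
    + apply lt_0_INR; lia.
    + apply le_INR; lia.
Qed.

Lemma survLa_succ_le (theta beta : R) (a n : nat) : 0 <= theta -> 0 <= beta ->
  survLa theta beta a (S n) <= survLa theta beta a n.
Proof.
  intros Htheta Hbeta. unfold survLa. rewrite Nat.add_succ_r.
  assert (Hexp : theta * (pw beta a - pw beta (S (a + n)))
                 <= theta * (pw beta a - pw beta (a + n))).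
  { apply Rmult_le_compat_l; [exact Htheta|].
    pose proof (pw_succ_ge beta (a + n) Hbeta). lra. }
  destruct Hexp as [Hlt|Heq].
  - left. apply exp_increasing, Hlt.
  - right. rewrite Heq. reflexivity.
Qed.

Lemma survLa_add (theta beta : R) (a d j : nat) :
  survLa theta beta a (d + j) = survLa theta beta a d * survLa theta beta (a + d) j.
Proof.
  unfold survLa. rewrite <- exp_plus, Nat.add_assoc. f_equal. ring.
Qed.

Lemma pmfLa_shift (theta beta : R) (a d n : nat) :
  pmfLa theta beta a (d + S n) = survLa theta beta a d * pmfLa theta beta (a + d) (S n).
Proof.
  unfold pmfLa. replace (d + S n - 1)%nat with (d + (S n - 1))%nat by lia.
  rewrite !survLa_add. ring.
Qed.

Lemma ex_series_telescope (u : nat -> R) : ex_finite_lim_seq u ->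
  ex_series (fun n => u n - u (S n)).
Proof.
  intros [l Hl]. exists (u 0%nat - l).
  change (is_lim_seq (sum_n (fun n => u n - u (S n))) (u 0%nat - l)).
  apply (is_lim_seq_ext (fun N => u 0%nat - u (S N))).
  - intro N. induction N as [|N IH].
    + rewrite sum_O. reflexivity.
    + rewrite sum_Sn, <- IH. unfold plus; simpl. ring.
  - apply (is_lim_seq_minus' (fun _ => u 0%nat) (fun N => u (S N))).
    + apply is_lim_seq_const.
    + apply (is_lim_seq_incr_1 u (Finite l)), Hl.
Qed.

(* The failure probabilities P(L_a = k), k >= 1, are summable: they
   telescope along the nonincreasing, nonnegative survival function. *)
Lemma ex_series_pmfLa (theta beta : R) (a : nat) : 0 <= theta -> 0 <= beta ->
  ex_series (fun n => pmfLa theta beta a (S n)).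
Proof.
  intros Htheta Hbeta.
  apply (ex_series_ext (fun n => survLa theta beta a n - survLa theta beta a (S n))).
  - intro n. unfold pmfLa. replace (S n - 1)%nat with n by lia. reflexivity.
  - apply ex_series_telescope, (ex_finite_lim_seq_decr _ 0).
    + intro n. apply survLa_succ_le; assumption.
    + intro n. left. apply exp_pos.
Qed.

Lemma Qcost_early (g h m c : R) (T s : Z) (a : nat) (t u : Z) :
  (u <= t)%Z -> (u <= T)%Z -> Qcost g h m c T s a t u = g + IZR (T - u) * c.
Proof.
  intros Hut HuT. unfold Qcost.
  destruct (Z.leb_spec t T), (Z.leb_spec u t), (Z.leb_spec u T);
    solve [lia | reflexivity].
Qed.

Lemma Qcost_late (g h m c : R) (T s : Z) (a : nat) (t u : Z) :
  (t <= T + 1)%Z -> (T < u)%Z -> Qcost g h m c T s a t u = Qcost g h m c T s a t (T + 1).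
Proof.
  intros Ht Hu. unfold Qcost.
  destruct (Z.leb_spec t T), (Z.leb_spec u t), (Z.leb_spec u T),
    (Z.leb_spec (T + 1) t), (Z.leb_spec (T + 1) T);
    solve [lia | reflexivity].
Qed.

(* Q only depends on the calendar time of failure and on the age reached at
   the planned maintenance, so it is invariant under advancing both the
   current time and the age by d. *)
Lemma Qcost_shift (g h m c : R) (T s : Z) (a d : nat) (t : Z) (n : nat) :
  Qcost g h m c T s a t (s + Z.of_nat (d + S n)) =
  Qcost g h m c T (s + Z.of_nat d) (a + d) t (s + Z.of_nat d + Z.of_nat (S n)).
Proof.
  unfold Qcost. rewrite !Nat2Z.inj_add.
  replace (s + (Z.of_nat d + Z.of_nat (S n)))%Z
    with (s + Z.of_nat d + Z.of_nat (S n))%Z by ring.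
  replace (t - (s + Z.of_nat d) + (Z.of_nat a + Z.of_nat d))%Z
    with (t - s + Z.of_nat a)%Z by ring.
  reflexivity.
Qed.

(* The series defining f_(s,a)(t) converges: its terms are eventually a
   constant multiple of the summable failure probabilities. *)
Lemma ex_series_fcost (theta beta g h m c : R) (T s : Z) (a : nat) (t : Z) :
  0 <= theta -> 0 <= beta -> (t <= T + 1)%Z ->
  ex_series (fun n => pmfLa theta beta a (S n) * Qcost g h m c T s a t (s + Z.of_nat (S n))).
Proof.
  intros Htheta Hbeta Ht.
  set (N := Z.to_nat (T - s)).
  apply (proj2 (ex_series_incr_n _ N)).
  apply (ex_series_ext
           (fun k => scal (Qcost g h m c T s a t (T + 1)) (pmfLa theta beta a (S (N + k))))).
  - intro k. rewrite (Qcost_late _ _ _ _ _ _ _ t (s + Z.of_nat (S (N + k)))) by (unfold N; lia).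
    unfold scal; simpl; unfold mult; simpl. ring.
  - apply (ex_series_scal_l _ (fun k => pmfLa theta beta a (S (N + k)))).
    apply (proj1 (ex_series_incr_n (fun n => pmfLa theta beta a (S n)) N)).
    apply ex_series_pmfLa; assumption.
Qed.

Definition early_cost (theta beta g c : R) (T s : Z) (a d : nat) : R :=
  sumk (fun k => pmfLa theta beta a k * (g + IZR (T - (s + Z.of_nat k)) * c)) d.

Lemma sumk_sum_f_R0 (f : nat -> R) (d : nat) : (1 <= d)%nat ->
  sum_f_R0 (fun n => f (S n)) (pred d) = sumk f d.
Proof.
  intros Hd. destruct d as [|d]; [lia|]. clear Hd. simpl pred.
  induction d as [|d IH]; [simpl; ring|].
  simpl sum_f_R0. rewrite IH. reflexivity.
Qed.

Lemma fcost_renewal (theta beta g h m c : R) (T s : Z) (a d : nat) (t : Z) :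
  0 <= theta -> 0 <= beta -> (1 <= d)%nat ->
  (s + Z.of_nat d <= T)%Z -> (s + Z.of_nat d <= t <= T + 1)%Z ->
  fcost theta beta g h m c T s a t =
  early_cost theta beta g c T s a d
  + survLa theta beta a d * fcost theta beta g h m c T (s + Z.of_nat d) (a + d) t.
Proof.
  intros Htheta Hbeta Hd HdT Ht. unfold fcost at 1.
  rewrite (Series_incr_n _ d) by (lia || (apply ex_series_fcost; auto; lia)).
  f_equal.
  - unfold early_cost. rewrite <- sumk_sum_f_R0 by exact Hd.
    apply sum_eq. intros i Hi. rewrite Qcost_early; [reflexivity| |]; lia.
  - unfold fcost. rewrite <- Series_scal_l. apply Series_ext. intro n.
    rewrite <- Nat.add_succ_r, pmfLa_shift, Qcost_shift. ring.
Qed.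

Theorem proposition2 (theta beta g h m c : R) (T s : Z) (a delta : nat) (tsa : Z) :
  0 < theta -> 1 < beta -> 0 <= g -> 0 <= h -> 0 <= m ->
  (0 < T)%Z ->
  is_c theta beta g h m c ->
  (s < T)%Z ->
  is_minimizer theta beta g h m c T s a tsa ->
  (1 <= delta)%nat ->
  (s + Z.of_nat delta < tsa <= T)%Z ->
  is_minimizer theta beta g h m c T (s + Z.of_nat delta) (a + delta) tsa.
Proof.
  intros Htheta Hbeta _ _ _ _ _ _ [_ Hmin] Hdelta Htsa.
  split; [lia|]. intros t Ht.
  pose proof (Hmin t ltac:(lia)) as Hle.
  rewrite !(fcost_renewal theta beta g h m c T s a delta) in Hle by (lra || lia).
  apply (Rmult_le_reg_l (survLa theta beta a delta)); [apply exp_pos | lra].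
Qed.
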